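(* Let $\mathbf{X},\mathbf{Y}$ be s$\mathcal{H}$rms. A map $\mathbf{Z}:[0,T]^2\to G(\mathcal{H})$ coincides with $\mathbf{X}\boxplus\mathbf{Y}$ if and only if $\mathbf{Z}_{s,t}=\mathbf{Z}_{s,u}\star\mathbf{Z}_{u,t}$ for all $s,u,t\in[0,T]$ and, for every $s\in[0,T]$, $$\mathbf{Z}_{s,t}=\mathbf{X}_{s,t}\star\mathbf{Y}_{s,t}+R_{s,t}$$ for some $R_{s,t}\in\mathcal{H}'$ with $\langle R_{s,t},x\rangle=o(|t-s|)$ as $t\to s$ for all $x\in\mathcal{H}$. Moreover $$\mathbf{X}_{s,t}\star\mathbf{Y}_{s,t}=\mathbf{Y}_{s,t}\star\mathbf{X}_{s,t}+r_{s,t}=\mathbf{X}_{s,t}+\mathbf{Y}_{s,t}-\mathbf{1}^*+r'_{s,t}$$ for some $r_{s,t},r'_{s,t}\in\mathcal{H}'$ with $\langle r_{s,t},x\rangle,\langle r'_{s,t},x\rangle=o(|t-s|)$ as $t\to s$ for all $x\in\mathcal{H}$.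
   Context: Fix $T>0$. $(\mathcal{H},\cdot,\Delta)$: connected, $\mathbb{N}$-graded, locally finite commutative Hopf algebra over $\mathbb{R}$ ($\mathcal{H}=\bigoplus_n\mathcal{H}_n$, $\dim\mathcal{H}_n<\infty$, $\mathcal{H}_0=\mathbb{R}\mathbf{1}$), counit $\mathbf{1}^*$. $\mathcal{H}'=\mathrm{Hom}(\mathcal{H},\mathbb{R})$ with pointwise topology and product $\langle\alpha\star\beta,h\rangle=\langle\alpha\otimes\beta,\Delta h\rangle$ (unit $\mathbf{1}^*$). $G(\mathcal{H})\subset\mathcal{H}'$: characters ($\alpha(hk)=\alpha(h)\alpha(k)$, $\alpha(\mathbf{1})=1$), a group under $\star$; $\mathfrak{g}(\mathcal{H})$: infinitesimal characters ($\alpha(hk)=\alpha(h)\mathbf{1}^*(k)+\mathbf{1}^*(h)\alpha(k)$). s$\mathcal{H}$rm: non-zero map $\mathbf{X}:[0,T]^2\to\mathcal{H}'$ with $\mathbf{X}_{s,t}\in G(\mathcal{H})$, $\mathbf{X}_{s,u}\star\mathbf{X}_{u,t}=\mathbf{X}_{s,t}$, and $t\mapsto\langle\mathbf{X}_{s,t},h\rangle$ smooth for all $h$ and $s$. Diagonal derivative $\dot{\mathbf{X}}_{s,s}=\partial_t|_{t=s}\mathbf{X}_{s,t}\in\mathfrak{g}(\mathcal{H})$. For a smooth $\eta:[0,T]\to\mathfrak{g}(\mathcal{H})$ the equation $\dot\gamma(t)=\gamma(t)\star\eta(t)$, $\gamma(0)=\mathbf{1}^*$, has a unique smooth solution (the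 Cartan development). The canonical sum $\mathbf{X}\boxplus\mathbf{Y}$ is the s$\mathcal{H}$rm $(s,t)\mapsto\mathbf{Z}_s^{-1}\star\mathbf{Z}_t$, where $\mathbf{Z}$ is the Cartan development of $t\mapsto\dot{\mathbf{X}}_{t,t}+\dot{\mathbf{Y}}_{t,t}$. *)

From HB Require Import structures.
From mathcomp Require Import all_boot all_order all_algebra.
From mathcomp Require Import all_classical all_reals all_analysis.
Set Implicit Arguments. Unset Strict Implicit. Unset Printing Implicit Defensive.
Import Order.TTheory GRing.Theory Num.Theory.
Import numFieldNormedType.Exports.
Local Open Scope classical_set_scope.
Local Open Scope ring_scope.

Section HopfDefs.
Variables (R : realType) (H : comAlgType R).

(** Linear functionals H -> R; the algebraic dual H' is the set of these. *)
Definition linR (f : H -> R) : Prop :=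
  forall (a : R) (x y : H), f (a *: x + y) = a * f x + f y.

(** An element of H (x) H is represented (non-uniquely) by a finite list of
    simple tensors  sum_i a_i (x) b_i.  Its pairing with f (x) g: *)
Definition pair2 (f g : H -> R) (s : seq (H * H)) : R :=
  \sum_(p <- s) f p.1 * g p.2.

(** Two lists represent the same tensor iff they pair equally with all
    f (x) g, f g linear (true over a field). *)
Definition same_tensor (s1 s2 : seq (H * H)) : Prop :=
  forall f g, linR f -> linR g -> pair2 f g s1 = pair2 f g s2.

(** Connected, N-graded, locally finite, commutative Hopf algebra over R,
    whose underlying commutative R-algebra is H. *)
Record cgHopf := CgHopf {
  cop : H -> seq (H * H);          (* coproduct, in Sweedler form *)
  eps : H -> R;                    (* counit 1^* *)
  antipode : H -> H;
  grade : nat -> set H;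
  cop_lin : forall (a : R) (x y : H),
    same_tensor (cop (a *: x + y))
                ([seq (a *: p.1, p.2) | p <- cop x] ++ cop y);
  cop_coassoc : forall (h : H) (f g k : H -> R), linR f -> linR g -> linR k ->
    \sum_(p <- cop h) f p.1 * pair2 g k (cop p.2)
    = \sum_(p <- cop h) pair2 f g (cop p.1) * k p.2;
  eps_lin : linR eps;
  counit_l : forall h, \sum_(p <- cop h) eps p.1 *: p.2 = h;
  counit_r : forall h, \sum_(p <- cop h) eps p.2 *: p.1 = h;
  cop_mul : forall x y : H,
    same_tensor (cop (x * y))
                [seq (p.1 * q.1, p.2 * q.2) | p <- cop x, q <- cop y];
  cop_one : same_tensor (cop 1) [:: (1, 1)];
  eps_mul : forall x y : H, eps (x * y) = eps x * eps y;
  eps_one : eps 1 = 1;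
  antipode_lin : forall (a : R) (x y : H),
    antipode (a *: x + y) = a *: antipode x + antipode y;
  antipode_l : forall h, \sum_(p <- cop h) antipode p.1 * p.2 = eps h *: 1;
  antipode_r : forall h, \sum_(p <- cop h) p.1 * antipode p.2 = eps h *: 1;
  grade_subspace : forall n, grade n 0 /\
    (forall (a : R) (x y : H), grade n x -> grade n y -> grade n (a *: x + y));
  grade_finite : forall n, exists s : seq H,
    (forall x, x \in s -> grade n x) /\
    (forall h, grade n h -> exists c : 'I_(size s) -> R,
        h = \sum_(i < size s) c i *: s`_i);
  grade_span : forall h : H, exists (N : nat) (c : nat -> H),
    (forall n, grade n (c n)) /\ h = \sum_(n < N) c n;
  grade_direct : forall (N : nat) (c : nat -> H),
    (forall n, grade n (c n)) -> \sum_(n < N) c n = 0 ->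
    forall n, (n < N)%N -> c n = 0;
  grade_mul : forall m n (x y : H), grade m x -> grade n y -> grade (m + n) (x * y);
  grade_connected : grade 0 = [set a *: (1 : H) | a in [set: R]];
  grade_cop : forall n h, grade n h ->
    exists s : seq (nat * (H * H)),
      same_tensor (cop h) (map snd s) /\
      (forall q, q \in s -> (q.1 <= n)%N /\ grade q.1 q.2.1 /\ grade (n - q.1) q.2.2);
  grade_eps : forall n h, (0 < n)%N -> grade n h -> eps h = 0
}.

Variable hA : cgHopf.

Definition hconv (a b : H -> R) : H -> R := fun h => pair2 a b (cop hA h).

Definition is_char (a : H -> R) : Prop :=
  linR a /\ (forall x y, a (x * y) = a x * a y) /\ a 1 = 1.
Definition is_infchar (a : H -> R) : Prop :=
  linR a /\ (forall x y, a (x * y) = a x * eps hA y + eps hA x * a y).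

Definition char_inv (a : H -> R) : H -> R := fun h => a (antipode hA h).

End HopfDefs.

Section Calculus.
Variable R : realType.

Definition inI (T x : R) : Prop := 0 <= x <= T.

(** f has derivative l at x, within [0,T] (one-sided at the endpoints). *)
Definition has_deriv_on (T : R) (f : R -> R) (x l : R) : Prop :=
  (fun y => (f y - f x) / (y - x)) @ within (inI T) (x^') --> l.

Definition smooth_on (T : R) (f : R -> R) : Prop :=
  exists F : nat -> R -> R, F 0%N = f /\
    forall k x, inI T x -> has_deriv_on T (F k) x (F k.+1 x).

Definition small_o (T s : R) (f : R -> R) : Prop :=
  (fun t => f t / `|t - s|) @ within (inI T) (s^') --> (0 : R).

End Calculus.

Section Rough.
Variables (R : realType) (H : comAlgType R) (hA : cgHopf H) (T : R).

Definition is_srm (X : R -> R -> H -> R) : Prop :=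
  (exists s t, inI T s /\ inI T t /\ X s t <> (fun _ => 0)) /\
  (forall s t, inI T s -> inI T t -> is_char (X s t)) /\
  (forall s u t, inI T s -> inI T u -> inI T t -> hconv hA (X s u) (X u t) = X s t) /\
  (forall s h, inI T s -> smooth_on T (fun t => X s t h)).

Definition cartan_dev (eta gam : R -> H -> R) : Prop :=
  (forall t, inI T t -> linR (gam t)) /\
  gam 0 = eps hA /\
  (forall h, smooth_on T (fun t => gam t h)) /\
  (forall t h, inI T t -> has_deriv_on T (fun u => gam u h) t (hconv hA (gam t) (eta t) h)).

(** The diagonal
    derivatives dX t = d/du|_{u=t} X_{t,u} are given relationally (they are
    unique since limits in R are unique and T > 0); the Cartan development is
    unique, so "some" development = "the" development. *)
Definition is_boxplus (X Y Z : R -> R -> H -> R) : Prop :=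
  exists dX dY gam : R -> H -> R,
    (forall t h, inI T t -> has_deriv_on T (fun u => X t u h) t (dX t h)) /\
    (forall t h, inI T t -> has_deriv_on T (fun u => Y t u h) t (dY t h)) /\
    cartan_dev (fun t h => dX t h + dY t h) gam /\
    (forall s t, inI T s -> inI T t -> Z s t = hconv hA (char_inv hA (gam s)) (gam t)).

End Rough.

(* If a family C of characters satisfies C_t = eps and has derivative d at t,
   then d is an infinitesimal character, and by the Leibniz rule the map
   t |-> (X_{s,t} * Y_{s,t})(x) has derivative dX_s(x) + dY_s(x) at t = s.
   So do t |-> (Y_{s,t} * X_{s,t})(x), t |-> X_{s,t}(x) + Y_{s,t}(x) - eps(x)
   and, when Z = X [+] Y, t |-> Z_{s,t}(x); all take the value eps(x) at t = s,
   which gives the o(|t - s|) estimates.  Conversely, if Z is a Chen family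
   with that first-order behaviour, then d/dt Z_{0,t} = Z_{0,t} * (dX_t + dY_t),
   so t |-> Z_{0,t} is the Cartan development (its smoothness is bootstrapped
   from this equation) and Z_{s,t} = Z_{0,s}^{-1} * Z_{0,t}.
   The Cartan development stays in G(H) because its multiplicativity defect
   g(xy) - g(x) g(y) solves a linear equation forced only by the defect in
   lower degree, hence vanishes by induction on the grading. *)

From HB Require Import structures.
From mathcomp Require Import all_boot all_order all_algebra.
From mathcomp Require Import all_classical all_reals all_analysis.
From mathcomp Require Import ring lra zify.
Import Order.TTheory GRing.Theory Num.Theory.
Import numFieldNormedType.Exports.
Set Implicit Arguments. Unset Strict Implicit. Unset Printing Implicit Defensive.
Local Open Scope classical_set_scope.
Local Open Scope ring_scope.

Section OneSidedCalculus.
Variables (R : realType) (T : R).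
Hypothesis T_gt0 : 0 < T.
Local Notation I := (inI T).
Local Notation hd := (has_deriv_on T).

Lemma inI0 : I 0.
Proof. by rewrite /inI lexx ltW. Qed.

Lemma cvg_within_inIP (g : R -> R) x l :
  g @ within I x^' --> l <-> forall e, 0 < e -> exists2 d, 0 < d &
     forall y, I y -> y != x -> `|x - y| < d -> `|l - g y| < e.
Proof.
rewrite cvgrPdist_lt; split => Hg e e0; have := Hg e e0.
- rewrite /within /dnbhs /within => /nbhs_ballP [d d0 Hd]; exists d => //.
  by move=> y Iy yx xy; apply: Hd => //; rewrite -ball_normE /ball_.
- move=> [d d0 Hd]; rewrite /within /dnbhs /within; apply/nbhs_ballP.
  by exists d => // y; rewrite -ball_normE /ball_ /= => xy yx Iy; apply: Hd.
Qed.

Lemma within_inI_proper x : I x -> ProperFilter (within I x^').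
Proof.
move=> /andP[x0 xT]; apply: Build_ProperFilter_ex => P.
rewrite /within /dnbhs /within => /nbhs_ballP [d d0 Hd].
have Pball y : `|x - y| < d -> y != x -> I y -> P y.
  by move=> xy; apply: Hd; rewrite -ball_normE /ball_.
have [xT'|Tx] := ltP x T.
- have [a [a0 ad aT]] : exists a, [/\ 0 < a, a <= d & a <= T - x].
    by exists (Num.min d (T - x)); rewrite lt_min d0 subr_gt0 xT' !ge_min !lexx orbT.
  exists (x + a / 2); apply: Pball; last by apply/andP; split; lra.
    by rewrite opprD addNKr normrN ger0_norm; lra.
  by rewrite gt_eqF //; lra.
- have [a [a0 ad aT]] : exists a, [/\ 0 < a, a <= d & a <= T].
    by exists (Num.min d T); rewrite lt_min d0 T_gt0 !ge_min !lexx orbT.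
  exists (x - a / 2); apply: Pball; last by apply/andP; split; lra.
    by rewrite opprB addrC subrK ger0_norm; lra.
  by rewrite lt_eqF //; lra.
Qed.

#[local] Instance within_inI_filter x : Filter (within I x^') := within_filter _ _.

Lemma near_within_inI x : \forall y \near within I x^', I y /\ y != x.
Proof.
rewrite /within /dnbhs /within; apply/nbhs_ballP.
by exists 1 => [|y _ yx Iy]; [exact: ltr01 | split].
Qed.

Lemma has_deriv_on_quotient f x l G :
  (forall y, I y -> y != x -> G y = (f y - f x) / (y - x)) ->
  G @ within I x^' --> l -> hd f x l.
Proof.
move=> eG; apply: cvg_trans; apply: near_eq_cvg.
near=> y; have [Iy yx] : I y /\ y != x by near: y; exact: near_within_inI.
by rewrite eG.
Unshelve. all: by end_near. Qed.

Lemma has_deriv_on_cvg f x l : hd f x l -> f @ within I x^' --> f x.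
Proof.
move=> fx.
have sub_cvg : (fun y => y - x) @ within I x^' --> (0 : R).
  by apply/cvg_within_inIP => e e0; exists e => // y _ _; rewrite sub0r opprB.
have : (fun y => f x + (f y - f x) / (y - x) * (y - x)) @ within I x^' --> f x + l * 0.
  exact: cvgD (cvg_cst _) (cvgM fx sub_cvg).
rewrite mulr0 addr0; apply: cvg_trans; apply: near_eq_cvg.
near=> y; have [_ yx] : I y /\ y != x by near: y; exact: near_within_inI.
by rewrite /= divfK ?subr_eq0 // addrC subrK.
Unshelve. all: by end_near. Qed.

Lemma has_deriv_on_ext f g x l :
  (forall y, I y -> f y = g y) -> I x -> hd f x l -> hd g x l.
Proof. by move=> fg Ix; apply: has_deriv_on_quotient => y Iy _; rewrite !fg. Qed.

Lemma has_deriv_on_unique f x a b : I x -> hd f x a -> hd f x b -> a = b.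
Proof. by move=> /within_inI_proper PF fa fb; exact: (cvg_unique _ fa fb). Qed.

Lemma has_deriv_on_cst c x : hd (fun _ => c) x 0.
Proof. by apply: has_deriv_on_quotient (cvg_cst _) => y _ _; rewrite subrr mul0r. Qed.

Lemma has_deriv_onD f g x a b :
  hd f x a -> hd g x b -> hd (fun y => f y + g y) x (a + b).
Proof.
move=> fa gb; apply: has_deriv_on_quotient (cvgD fa gb) => y _ _.
by rewrite -mulrDl opprD addrACA.
Qed.

Lemma has_deriv_onN f x a : hd f x a -> hd (fun y => - f y) x (- a).
Proof.
move=> fa; apply: has_deriv_on_quotient (cvgN fa) => y _ _.
by rewrite -mulNr opprB opprK addrC.
Qed.

Lemma has_deriv_onM f g x a b : hd f x a -> hd g x b ->
  hd (fun y => f y * g y) x (a * g x + f x * b).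
Proof.
move=> fa gb.
pose dq h y := (h y - h x) / (y - x).
apply: (@has_deriv_on_quotient _ _ _ (fun y => dq f y * g y + f x * dq g y)).
  by move=> y _ yx; rewrite /dq; field; rewrite subr_eq0.
apply: cvgD; last exact: cvgMl_tmp.
by apply: cvgM; [exact: fa | exact: has_deriv_on_cvg gb].
Qed.

Lemma has_deriv_onZ c f x a : hd f x a -> hd (fun y => c * f y) x (c * a).
Proof. by move/(has_deriv_onM (has_deriv_on_cst c x)); rewrite mul0r add0r. Qed.

Lemma has_deriv_on_sum (A : Type) (s : seq A) (F : A -> R -> R) (L : A -> R) x :
  (forall p, hd (F p) x (L p)) ->
  hd (fun y => \sum_(p <- s) F p y) x (\sum_(p <- s) L p).
Proof.
move=> FL; elim: s => [|p s IHs].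
  rewrite big_nil; apply: has_deriv_on_quotient (has_deriv_on_cst 0 x) => y _ _.
  by rewrite !big_nil.
rewrite big_cons; apply: has_deriv_on_quotient (has_deriv_onD (FL p) IHs) => y _ _.
by rewrite !big_cons.
Qed.

Lemma has_deriv_on_is_derive f x l : 0 < x < T -> hd f x l -> is_derive x 1 f l.
Proof.
move=> /andP[x0 xT] fl.
have dq_cvg : (fun h => h^-1 *: ((f \o shift x) (h *: 1) - f x)) @ 0^' --> l.
  apply/cvgrPdist_lt => e e0; have [d d0 Hd] := (cvg_within_inIP _ x l).1 fl e e0.
  have [m [m0 md mx mT]] : exists m, [/\ 0 < m, m <= d, m <= x & m <= T - x].
    exists (Num.min d (Num.min x (T - x))).
    by rewrite !lt_min d0 x0 subr_gt0 xT !ge_min !lexx !orbT.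
  rewrite /dnbhs /within; apply/nbhs_ballP; exists m => // h.
  rewrite -ball_normE /ball_ /= sub0r normrN => hm h0.
  have /andP[hm1 hm2] : - m < h < m by rewrite -ltr_norml.
  have := Hd (h + x); rewrite addrK mulrC scaler1 => -> //.
  - by apply/andP; split; lra.
  - by rewrite -subr_eq0 addrK.
  - by rewrite opprD addrCA subrr addr0 normrN (lt_le_trans hm md).
apply: DeriveDef; first by apply/cvg_ex; exists l.
exact: cvg_lim dq_cvg.
Qed.

Lemma has_deriv_on_within_continuous f l t :
  (forall x, I x -> hd f x (l x)) -> t <= T -> {within `[0, t], continuous f}.
Proof.
move=> fl tT; apply/subspace_continuousP => x; rewrite /= in_itv /= => /andP[x0 xt].
have Ix : I x by apply/andP; split => //; exact: (le_trans xt).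
have := has_deriv_on_cvg (fl x Ix); rewrite !cvgrPdist_lt => fx e e0.
have := fx e e0; rewrite /within /dnbhs /within => /nbhs_ballP [d d0 Hd].
apply/nbhs_ballP; exists d => // y Hy; rewrite /= in_itv /= => /andP[y0 yt].
have [->|yx] := eqVneq y x; first by rewrite subrr normr0.
by apply: Hd => //; apply/andP; split => //; exact: (le_trans yt).
Qed.

Lemma has_deriv_on0_const f :
  (forall x, I x -> hd f x 0) -> forall t, I t -> f t = f 0.
Proof.
move=> f0 t /andP[t0 tT]; have [->//|t_neq0] := eqVneq t 0.
have t_gt0 : 0 < t by rewrite lt_def t_neq0 t0.
have [c _] : exists2 c, c \in `]0, t[ & f t - f 0 = (fun _ => 0) c * (t - 0).
  apply: MVT => //; last exact: has_deriv_on_within_continuous f0 tT.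
  move=> x; rewrite in_itv /= => /andP[x0 xt].
  apply: has_deriv_on_is_derive; first by rewrite x0 (lt_le_trans xt).
  by apply: f0; apply/andP; split; [exact: ltW | exact: (le_trans (ltW xt))].
by move/eqP; rewrite mul0r subr_eq0 => /eqP.
Qed.

Lemma small_o_has_deriv_on0 s f : f s = 0 -> small_o T s f <-> hd f s 0.
Proof.
move=> fs0; rewrite /small_o /has_deriv_on !cvg_within_inIP.
have E y : `|0 - f y / `|y - s| | = `|0 - (f y - f s) / (y - s)|.
  by rewrite fs0 subr0 !sub0r !normrN !normrM !normfV normr_id.
by split => fo e e0; have [d d0 Hd] := fo e e0; exists d => // y Iy ys sy;
  [rewrite -E | rewrite E]; exact: Hd.
Qed.

Lemma small_o_sub s f g l : f s = g s -> hd f s l -> hd g s l ->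
  small_o T s (fun t => f t - g t).
Proof.
move=> fgs fl gl; apply/small_o_has_deriv_on0; first by rewrite fgs subrr.
by rewrite -(subrr l); exact: has_deriv_onD fl (has_deriv_onN gl).
Qed.

Definition deriv_on (f : R -> R) x : R :=
  lim ((fun y => (f y - f x) / (y - x)) @ within I x^').

Definition derivable_on (f : R -> R) := forall x, I x -> hd f x (deriv_on f x).

Definition derivable_upto k (f : R -> R) :=
  forall j, (j < k)%N -> derivable_on (iter j deriv_on f).

Lemma deriv_onE f x l : I x -> hd f x l -> deriv_on f x = l.
Proof. by move=> /within_inI_proper PF fl; exact: cvg_lim fl. Qed.

Lemma eq_deriv_on f g :
  (forall y, I y -> f y = g y) -> forall x, I x -> deriv_on f x = deriv_on g x.
Proof.
move=> fg x Ix; rewrite /deriv_on; congr lim; apply/funext => A; apply/propext.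
suff dq_eq : {near within I x^', (fun y => (f y - f x) / (y - x)) =1
                                 (fun y => (g y - g x) / (y - x))}.
  by split; apply: near_eq_cvg; [|apply: filterS dq_eq => y ->].
near=> y; have [Iy _] : I y /\ y != x by near: y; exact: near_within_inI.
by rewrite !fg.
Unshelve. all: by end_near. Qed.

Lemma eq_derivable_upto k f g :
  (forall y, I y -> f y = g y) -> derivable_upto k f -> derivable_upto k g.
Proof.
move=> fg fk j jk x Ix.
have iter_eq i y : I y -> iter i deriv_on f y = iter i deriv_on g y.
  by elim: i y => [|i IHi] y Iy /=; [exact: fg | exact: eq_deriv_on].
rewrite -(eq_deriv_on (iter_eq j) Ix).
exact: has_deriv_on_ext (iter_eq j) Ix (fk j jk x Ix).
Qed.

Lemma derivable_uptoS k f :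
  derivable_upto k.+1 f <-> derivable_on f /\ derivable_upto k (deriv_on f).
Proof.
split => [fk | [f1 fk] [|j] jk //=].
  by split => [|j jk]; [exact: (fk 0%N) | rewrite -iterSr; exact: fk].
by rewrite -iterS iterSr; exact: fk.
Qed.

Lemma derivable_upto_step k f l :
  (forall x, I x -> hd f x (l x)) -> derivable_upto k l -> derivable_upto k.+1 f.
Proof.
move=> fl lk; apply/derivable_uptoS; split => [x Ix|].
  by rewrite (deriv_onE Ix (fl x Ix)); exact: fl.
by apply: eq_derivable_upto lk => y Iy; rewrite (deriv_onE Iy (fl y Iy)).
Qed.

Lemma derivable_upto_cst k c : derivable_upto k (fun _ => c).
Proof.
elim: k c => [//|k IHk] c.
by apply: (derivable_upto_step (l := fun _ => 0)) (IHk 0) => x _; exact: has_deriv_on_cst.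
Qed.

Lemma derivable_uptoD k f g : derivable_upto k f -> derivable_upto k g ->
  derivable_upto k (fun y => f y + g y).
Proof.
elim: k f g => [//|k IHk] f g /derivable_uptoS[f1 fk] /derivable_uptoS[g1 gk].
apply: derivable_upto_step (IHk _ _ fk gk) => x Ix.
exact: has_deriv_onD (f1 x Ix) (g1 x Ix).
Qed.

Lemma derivable_uptoW k f : derivable_upto k.+1 f -> derivable_upto k f.
Proof. by move=> fk j jk; apply: fk; exact: ltnW. Qed.

Lemma derivable_uptoM k f g : derivable_upto k f -> derivable_upto k g ->
  derivable_upto k (fun y => f y * g y).
Proof.
elim: k f g => [//|k IHk] f g fk gk.
have [f1 f'k] := derivable_uptoS k f; have [g1 g'k] := derivable_uptoS k g.
move: (f1 fk) (g1 gk) => [df f'] [dg g'].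
apply: derivable_upto_step
  (derivable_uptoD (IHk _ _ f' (derivable_uptoW gk)) (IHk _ _ (derivable_uptoW fk) g')).
by move=> x Ix; exact: has_deriv_onM (df x Ix) (dg x Ix).
Qed.

Lemma derivable_upto_sum k (A : Type) (s : seq A) (F : A -> R -> R) :
  (forall p, derivable_upto k (F p)) -> derivable_upto k (fun y => \sum_(p <- s) F p y).
Proof.
move=> Fk; elim: s => [|p s IHs].
  by apply: eq_derivable_upto _ (@derivable_upto_cst k 0) => y _; rewrite big_nil.
by apply: eq_derivable_upto _ (derivable_uptoD (Fk p) IHs) => y _; rewrite big_cons.
Qed.

Lemma smooth_onP f : smooth_on T f <-> forall k, derivable_upto k f.
Proof.
split => [[F [F0 FS]] k j _ x Ix | fk].
  have iterE i y : I y -> iter i deriv_on f y = F i y.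
    elim: i y => [|i IHi] y Iy /=; first by rewrite F0.
    by rewrite (eq_deriv_on IHi Iy); exact: deriv_onE Iy (FS i y Iy).
  rewrite (eq_deriv_on (iterE j) Ix) (deriv_onE Ix (FS j x Ix)).
  by apply: (has_deriv_on_ext _ Ix (FS j x Ix)) => y Iy; rewrite iterE.
by exists (fun k => iter k deriv_on f); split => // k x Ix; exact: (fk k.+1 k).
Qed.

Lemma smooth_on_bootstrap (A : Type) (F G : A -> R -> R) :
  (forall a x, I x -> hd (F a) x (G a x)) ->
  (forall k, (forall a, derivable_upto k (F a)) -> forall a, derivable_upto k (G a)) ->
  forall a, smooth_on T (F a).
Proof.
move=> FG Gk a; apply/smooth_onP => k; elim: k a => [//|k IHk] a.
by apply: derivable_upto_step (Gk k IHk a); exact: FG.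
Qed.

End OneSidedCalculus.

Section ConvolutionAlgebra.
Variables (R : realType) (H : comAlgType R) (hA : cgHopf H).
Local Notation eps := (eps hA).
Local Notation conv := (hconv hA).
Local Notation inv := (char_inv hA).

Section LinearFunctional.
Variable f : H -> R.
Hypothesis f_lin : linR f.

Lemma linR0 : f 0 = 0.
Proof.
have := f_lin 1 0 0; rewrite scale1r addr0 mul1r => f00.
by apply: (addrI (f 0)); rewrite addr0 -f00.
Qed.

Lemma linRD x y : f (x + y) = f x + f y.
Proof. by rewrite -[x in LHS]scale1r f_lin mul1r. Qed.

Lemma linRZ a x : f (a *: x) = a * f x.
Proof. by rewrite -[a *: x]addr0 f_lin linR0 addr0. Qed.

Lemma linR_sum (A : Type) (s : seq A) (F : A -> H) :
  f (\sum_(p <- s) F p) = \sum_(p <- s) f (F p).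
Proof. by elim: s => [|p s IHs]; rewrite ?big_nil ?linR0 // !big_cons linRD IHs. Qed.

End LinearFunctional.

Lemma linR_sub (f g : H -> R) : linR f -> linR g -> linR (fun a => f a - g a).
Proof. by move=> lf lg c a b; rewrite lf lg; ring. Qed.

Lemma linR_add (f g : H -> R) : linR f -> linR g -> linR (fun a => f a + g a).
Proof. by move=> lf lg c a b; rewrite lf lg; ring. Qed.

Lemma linR_scale (f : H -> R) c : linR f -> linR (fun a => c * f a).
Proof. by move=> lf k a b; rewrite lf mulrDr mulrCA. Qed.

Lemma linR_comp_mulr (f : H -> R) y : linR f -> linR (fun a => f (a * y)).
Proof. by move=> lf c a b; rewrite mulrDl -scalerAl lf. Qed.

Lemma linR_comp_mull (f : H -> R) x : linR f -> linR (fun a => f (x * a)).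
Proof. by move=> lf c a b; rewrite mulrDr -scalerAr lf. Qed.

Lemma linR_hconv a b : linR a -> linR b -> linR (conv a b).
Proof.
move=> la lb c x y; rewrite /hconv (cop_lin hA c x y la lb).
rewrite /pair2 big_cat big_map /= mulr_sumr; congr (_ + _).
by apply: eq_bigr => p _; rewrite (linRZ la) mulrA.
Qed.

Lemma hconvA a b c : linR a -> linR b -> linR c ->
  conv (conv a b) c = conv a (conv b c).
Proof.
move=> la lb lc; apply/funext => h; rewrite /hconv /pair2.
by have := cop_coassoc hA h la lb lc; rewrite /pair2 => ->.
Qed.

Lemma hconv_epsl a : linR a -> conv eps a = a.
Proof.
move=> la; apply/funext => h; rewrite /hconv /pair2 -{2}(counit_l hA h).
by rewrite (linR_sum la); apply: eq_bigr => p _; rewrite (linRZ la).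
Qed.

Lemma hconv_epsr a : linR a -> conv a eps = a.
Proof.
move=> la; apply/funext => h; rewrite /hconv /pair2 -{2}(counit_r hA h).
by rewrite (linR_sum la); apply: eq_bigr => p _; rewrite (linRZ la) mulrC.
Qed.

Lemma hconv_subl (f g e : H -> R) c x :
  conv (fun a => f a - c * g a) e x = conv f e x - c * conv g e x.
Proof. by rewrite /hconv /pair2 mulr_sumr -sumrB; apply: eq_bigr => p _; ring. Qed.

Lemma linR_char_inv a : linR a -> linR (inv a).
Proof. by move=> la c x y; rewrite /char_inv antipode_lin la. Qed.

Lemma hconv_invl a : is_char a -> conv (inv a) a = eps.
Proof.
move=> [la [aM a1]]; apply/funext => h; rewrite /hconv /pair2 /char_inv.
under eq_bigr do rewrite -aM.
by rewrite -(linR_sum la) antipode_l (linRZ la) a1 mulr1.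
Qed.

Lemma hconv_invr a : is_char a -> conv a (inv a) = eps.
Proof.
move=> [la [aM a1]]; apply/funext => h; rewrite /hconv /pair2 /char_inv.
under eq_bigr do rewrite -aM.
by rewrite -(linR_sum la) antipode_r (linRZ la) a1 mulr1.
Qed.

Lemma char_hconv_idem a : is_char a -> conv a a = a -> a = eps.
Proof.
move=> ca aa; have la := ca.1.
have := hconvA (linR_char_inv la) la la; rewrite aa hconv_invl //.
by rewrite hconv_epsl.
Qed.

Lemma infchar1 e : is_infchar hA e -> e 1 = 0.
Proof.
move=> [_ eM]; have := eM 1 1; rewrite mulr1 (eps_one hA) mulr1 mul1r.
by move=> e11; apply: (addrI (e 1)); rewrite addr0 -e11.
Qed.

Lemma infcharD a b : is_infchar hA a -> is_infchar hA b ->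
  is_infchar hA (fun h => a h + b h).
Proof.
move=> [la aM] [lb bM]; split; first exact: linR_add.
by move=> x y; rewrite aM bM; ring.
Qed.

Lemma infchar_grade0 e x : is_infchar hA e -> grade hA 0 x -> e x = 0.
Proof.
move=> ie; rewrite (grade_connected hA) => -[a _ <-].
by rewrite (linRZ ie.1) infchar1 // mulr0.
Qed.

(* [e] is an [eps]-derivation, and the counit absorbs the other tensor factor. *)
Lemma hconv_infchar_mul (g e : H -> R) x y : linR g -> is_infchar hA e ->
  conv g e (x * y) = conv (fun a => g (a * y)) e x + conv (fun b => g (x * b)) e y.
Proof.
move=> lg [le eM]; rewrite /hconv (cop_mul hA x y lg le) /pair2.
rewrite (big_allpairs_dep (h := fun p q => (p.1 * q.1, p.2 * q.2))) /=.
under eq_bigr do under eq_bigr do rewrite eM mulrDr.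
under eq_bigr do rewrite big_split /=; rewrite big_split /=; congr (_ + _).
  apply: eq_bigr => p _; rewrite -{2}(counit_r hA y) mulr_sumr (linR_sum lg) mulr_suml.
  by apply: eq_bigr => q _; rewrite -(scalerAr (eps q.2) p.1 q.1) (linRZ lg); ring.
rewrite exchange_big; apply: eq_bigr => q _.
rewrite -{2}(counit_r hA x) mulr_suml (linR_sum lg) mulr_suml.
by apply: eq_bigr => p _; rewrite -(scalerAl (eps p.2) p.1 q.1) (linRZ lg); ring.
Qed.

Lemma hconv_grade (f g : H -> R) n x : linR f -> linR g -> grade hA n x ->
  exists2 s : seq (nat * (H * H)),
    conv f g x = \sum_(q <- s) f q.2.1 * g q.2.2 &
    forall q, q \in s -> [/\ (q.1 <= n)%N, grade hA q.1 q.2.1 & grade hA (n - q.1) q.2.2].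
Proof.
move=> lf lg /grade_cop [s [st sg]]; exists s.
  by rewrite /hconv (st f g lf lg) /pair2 big_map.
by move=> q /sg [? []].
Qed.

Lemma hconv_infchar_grade (f e : H -> R) n x :
  linR f -> is_infchar hA e -> grade hA n x ->
  (forall k a, (k < n)%N -> grade hA k a -> f a = 0) -> conv f e x = 0.
Proof.
move=> lf ie xn f0; have [s -> sg] := hconv_grade lf ie.1 xn.
rewrite big1_seq // => q /andP[_ /sg [qn q1 q2]].
have [qe|qlt] := eqVneq q.1 n.
  by rewrite (infchar_grade0 ie) ?mulr0 //; rewrite qe subnn in q2.
by rewrite (f0 q.1) ?mul0r // ltn_neqAle qlt qn.
Qed.

End ConvolutionAlgebra.

Section ConvolutionDerivatives.
Variables (R : realType) (H : comAlgType R) (hA : cgHopf H) (T : R).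
Hypothesis T_gt0 : 0 < T.
Local Notation I := (inI T).
Local Notation hd := (has_deriv_on T).
Local Notation eps := (eps hA).
Local Notation conv := (hconv hA).

Lemma has_deriv_on_hconvr (a : H -> R) (B : R -> H -> R) (b : H -> R) t h :
  (forall k, hd (fun u => B u k) t (b k)) ->
  hd (fun u => conv a (B u) h) t (conv a b h).
Proof. by move=> Bb; apply: has_deriv_on_sum => p; exact: has_deriv_onZ. Qed.

Lemma has_deriv_on_hconv (A B : R -> H -> R) (a b : H -> R) t h :
  A t = eps -> B t = eps -> linR a -> linR b ->
  (forall k, hd (fun u => A u k) t (a k)) -> (forall k, hd (fun u => B u k) t (b k)) ->
  hd (fun u => conv (A u) (B u) h) t (a h + b h).
Proof.
move=> At Bt la lb Aa Bb.
have := has_deriv_on_sum (s := cop hA h) (fun p => has_deriv_onM (Aa p.1) (Bb p.2)).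
congr hd; rewrite big_split /= At Bt.
by rewrite -[in RHS](hconv_epsr hA la) -[in RHS](hconv_epsl hA lb).
Qed.

Lemma has_deriv_on_char_infchar (C : R -> H -> R) t (d : H -> R) : I t ->
  (forall u, I u -> is_char (C u)) -> C t = eps ->
  (forall h, hd (fun u => C u h) t (d h)) -> is_infchar hA d.
Proof.
move=> It Cchar Ct Cd; split => [a x y | x y].
- apply: (has_deriv_on_unique T_gt0 It (Cd _)).
  apply: (has_deriv_on_ext _ It (has_deriv_onD (has_deriv_onZ (c := a) (Cd x)) (Cd y))).
  by move=> u Iu; rewrite (Cchar u Iu).1.
- rewrite (has_deriv_on_unique T_gt0 It (Cd _) (_ : hd _ t (d x * C t y + C t x * d y))).
    by rewrite Ct; ring.
  apply: (has_deriv_on_ext _ It (has_deriv_onM (Cd x) (Cd y))) => u Iu.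
  by rewrite (Cchar u Iu).2.1.
Qed.

End ConvolutionDerivatives.

Section CartanDevelopment.
Variables (R : realType) (H : comAlgType R) (hA : cgHopf H) (T : R).
Local Notation I := (inI T).
Local Notation hd := (has_deriv_on T).
Local Notation eps := (eps hA).
Local Notation conv := (hconv hA).

Variables (gam eta : R -> H -> R).
Hypothesis gam_lin : forall t, I t -> linR (gam t).
Hypothesis gam0 : gam 0 = eps.
Hypothesis eta_infchar : forall t, I t -> is_infchar hA (eta t).
Hypothesis gam_deriv :
  forall t h, I t -> hd (fun u => gam u h) t (conv (gam t) (eta t) h).

Lemma gam_one t : I t -> gam t 1 = 1.
Proof.
move=> It; rewrite -(eps_one hA) -gam0.
apply: (has_deriv_on0_const (T := T) (f := fun u => gam u 1)) => // x Ix.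
have := @gam_deriv x 1 Ix; congr hd.
rewrite /hconv (cop_one hA (gam_lin Ix) (eta_infchar Ix).1) /pair2 big_seq1 /=.
by rewrite (infchar1 (eta_infchar Ix)) mulr0.
Qed.

Definition mul_defect t x y := gam t (x * y) - gam t x * gam t y.

Lemma linR_mul_defectl t y : I t -> linR (fun a => mul_defect t a y).
Proof.
move=> It; apply: linR_sub; first exact: linR_comp_mulr (gam_lin It).
by move=> c a b; rewrite (gam_lin It); ring.
Qed.

Lemma linR_mul_defectr t x : I t -> linR (mul_defect t x).
Proof.
move=> It; apply: linR_sub; first exact: linR_comp_mull (gam_lin It).
exact: linR_scale (gam_lin It).
Qed.

(* The defect obeys a linear ODE driven by [eta], whose right-hand side only
   involves the defect in strictly lower total degree. *)
Lemma mul_defect_deriv t x y : I t ->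
  hd (fun u => mul_defect u x y) t
     (conv (fun a => mul_defect t a y) (eta t) x + conv (mul_defect t x) (eta t) y).
Proof.
move=> It.
have := has_deriv_onD (@gam_deriv t (x * y) It)
  (has_deriv_onN (has_deriv_onM (@gam_deriv t x It) (@gam_deriv t y It))).
congr hd; rewrite (hconv_infchar_mul _ _ (gam_lin It) (eta_infchar It)).
have -> : (fun a => mul_defect t a y) = (fun a => gam t (a * y) - gam t y * gam t a).
  by apply/funext => a; rewrite /mul_defect [gam t a * _]mulrC.
by rewrite /mul_defect !hconv_subl; ring.
Qed.

Lemma mul_defect_grade N n m x y : (n + m < N)%N ->
  grade hA n x -> grade hA m y -> forall t, I t -> mul_defect t x y = 0.
Proof.
elim: N n m x y => [//|N IHN] n m x y nmN xn ym.
suff d0 t : I t -> hd (fun u => mul_defect u x y) t 0.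
  by move=> t It; rewrite (has_deriv_on0_const d0 It) /mul_defect gam0 (eps_mul hA) subrr.
move=> It; have := @mul_defect_deriv t x y It; congr hd.
have dl := hconv_infchar_grade (linR_mul_defectl y It) (eta_infchar It) xn.
have dr := hconv_infchar_grade (linR_mul_defectr x It) (eta_infchar It) ym.
rewrite dl ?dr ?addr0 // => k a kb ak.
- by apply: (IHN n k) => //; lia.
- by apply: (IHN k m) => //; lia.
Qed.

Lemma mul_defect0 t x y : I t -> mul_defect t x y = 0.
Proof.
move=> It; have lg := gam_lin It.
have [N [c [cN ->]]] := grade_span hA x; have [M [d [dM ->]]] := grade_span hA y.
rewrite /mul_defect big_distrl /= !(linR_sum lg) big_distrl /= -sumrB big1 // => i _.
rewrite big_distrr /= (linR_sum lg) big_distrr /= -sumrB big1 // => j _.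
exact: (@mul_defect_grade (i + j).+1 i j).
Qed.

End CartanDevelopment.

Lemma cartan_dev_char (R : realType) (H : comAlgType R) (hA : cgHopf H) (T : R)
    (eta gam : R -> H -> R) :
  (forall t, inI T t -> is_infchar hA (eta t)) ->
  cartan_dev hA T eta gam -> forall t, inI T t -> is_char (gam t).
Proof.
move=> eta_inf [gam_lin [gam0 [_ gam_deriv]]] t It.
split; [exact: gam_lin | split => [x y|]].
  have := mul_defect0 gam_lin gam0 eta_inf gam_deriv x y It.
  by move/eqP; rewrite subr_eq0 => /eqP.
exact: (gam_one gam_lin gam0 eta_inf gam_deriv It).
Qed.

Lemma cartan_dev_increment_deriv (R : realType) (H : comAlgType R) (hA : cgHopf H)
    (T : R) (eta gam : R -> H -> R) s x :
  (forall t, inI T t -> is_infchar hA (eta t)) -> cartan_dev hA T eta gam -> inI T s ->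
  has_deriv_on T (fun u => hconv hA (char_inv hA (gam s)) (gam u) x) s (eta s x).
Proof.
move=> eta_inf gam_dev Is; have gs := cartan_dev_char eta_inf gam_dev Is.
have [_ [_ [_ gam_deriv]]] := gam_dev; have le := (eta_inf s Is).1.
have -> : eta s x = hconv hA (char_inv hA (gam s)) (hconv hA (gam s) (eta s)) x.
  rewrite -(hconvA hA (linR_char_inv hA gs.1) gs.1 le) (hconv_invl hA gs).
  by rewrite (hconv_epsl hA le).
exact: has_deriv_on_hconvr (fun k => gam_deriv s k Is).
Qed.

Section ChenFamilies.
Variables (R : realType) (H : comAlgType R) (hA : cgHopf H) (T : R).
Local Notation I := (inI T).
Local Notation eps := (eps hA).
Local Notation conv := (hconv hA).
Local Notation inv := (char_inv hA).

Section ChenFamily.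
Variable C : R -> R -> H -> R.
Hypothesis C_char : forall s t, I s -> I t -> is_char (C s t).
Hypothesis C_chen : forall s u t, I s -> I u -> I t -> conv (C s u) (C u t) = C s t.

Lemma chen_diag t : I t -> C t t = eps.
Proof. by move=> It; apply: char_hconv_idem (C_char It It) _; exact: C_chen. Qed.

Lemma chen_inv u s t : I u -> I s -> I t -> C s t = conv (inv (C u s)) (C u t).
Proof.
move=> Iu Is It; have lus := (C_char Iu Is).1.
rewrite -(C_chen Iu Is It) -(hconvA hA (linR_char_inv hA lus) lus (C_char Is It).1).
by rewrite (hconv_invl hA (C_char Iu Is)) hconv_epsl //; exact: (C_char Is It).1.
Qed.

End ChenFamily.

Lemma increments_chen (gam : R -> H -> R) : (forall t, I t -> is_char (gam t)) ->
  forall s u t, I s -> I u -> I t ->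
  conv (conv (inv (gam s)) (gam u)) (conv (inv (gam u)) (gam t))
  = conv (inv (gam s)) (gam t).
Proof.
move=> gam_char s u t Is Iu It; have lg t' : I t' -> linR (gam t') by move/gam_char => [].
rewrite (hconvA hA (linR_char_inv hA (lg s Is)) (lg u Iu)); last first.
  exact: linR_hconv (linR_char_inv hA (lg u Iu)) (lg t It).
rewrite -(hconvA hA (lg u Iu) (linR_char_inv hA (lg u Iu)) (lg t It)).
by rewrite (hconv_invr hA (gam_char u Iu)) (hconv_epsl hA (lg t It)).
Qed.

End ChenFamilies.

Section SmoothRoughMap.
Variables (R : realType) (H : comAlgType R) (hA : cgHopf H) (T : R).
Hypothesis T_gt0 : 0 < T.
Local Notation I := (inI T).
Local Notation hd := (has_deriv_on T).
Local Notation conv := (hconv hA).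
Local Notation inv := (char_inv hA).

Variable X : R -> R -> H -> R.
Hypothesis X_srm : is_srm hA T X.

Lemma srm_char s t : I s -> I t -> is_char (X s t).
Proof. exact: X_srm.2.1. Qed.

Lemma srm_lin s t : I s -> I t -> linR (X s t).
Proof. by move=> Is It; case: (srm_char Is It). Qed.

Lemma srm_chen s u t : I s -> I u -> I t -> conv (X s u) (X u t) = X s t.
Proof. exact: X_srm.2.2.1. Qed.

Lemma srm_diag t : I t -> X t t = eps hA.
Proof. by move=> It; exact: (chen_diag srm_char srm_chen It). Qed.

Lemma srm_derivable_upto s h k : I s -> derivable_upto T k (fun t => X s t h).
Proof. by move=> Is; move: k; apply/(smooth_onP T_gt0); exact: X_srm.2.2.2. Qed.

(* The diagonal derivative of [X], computed from the path [t |-> X 0 t] so that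
   its smoothness in [t] is visible. *)
Definition srm_deriv t : H -> R :=
  conv (inv (X 0 t)) (fun k => deriv_on T (fun u => X 0 u k) t).

Lemma has_deriv_on_srm_deriv t h : I t -> hd (fun u => X t u h) t (srm_deriv t h).
Proof.
move=> It; have I0 := inI0 T_gt0.
apply: (has_deriv_on_ext _ It (has_deriv_on_hconvr _)) => [u Iu | k].
  by rewrite (chen_inv srm_char srm_chen I0 It Iu).
by have /derivable_uptoS[+ _] := srm_derivable_upto (h := k) (k := 1%N) I0; apply.
Qed.

Lemma srm_diag_deriv_infchar t d : I t ->
  (forall h, hd (fun u => X t u h) t (d h)) -> is_infchar hA d.
Proof.
by move=> It; apply: (has_deriv_on_char_infchar T_gt0 It
  (fun u Iu => srm_char It Iu) (srm_diag It)).
Qed.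

Lemma srm_deriv_infchar t : I t -> is_infchar hA (srm_deriv t).
Proof.
by move=> It; apply: (srm_diag_deriv_infchar It) => h; exact: has_deriv_on_srm_deriv.
Qed.

Lemma derivable_upto_srm_deriv k h : derivable_upto T k (fun t => srm_deriv t h).
Proof.
have I0 := inI0 T_gt0.
apply: (derivable_upto_sum T_gt0) => p; apply: (derivable_uptoM T_gt0).
  exact: srm_derivable_upto.
by have /derivable_uptoS[] := srm_derivable_upto (h := p.2) (k := k.+1) I0.
Qed.

End SmoothRoughMap.

Lemma has_deriv_on_srm_hconv (R : realType) (H : comAlgType R) (hA : cgHopf H) (T : R)
    (X Y : R -> R -> H -> R) s x :
  0 < T -> is_srm hA T X -> is_srm hA T Y -> inI T s ->
  has_deriv_on T (fun u => hconv hA (X s u) (Y s u) x) s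
    (srm_deriv hA T X s x + srm_deriv hA T Y s x).
Proof.
move=> T_gt0 X_srm Y_srm Is.
apply: has_deriv_on_hconv (srm_diag X_srm Is) (srm_diag Y_srm Is) _ _ _ _.
- exact: (srm_deriv_infchar T_gt0 X_srm Is).1.
- exact: (srm_deriv_infchar T_gt0 Y_srm Is).1.
- by move=> k; exact: has_deriv_on_srm_deriv.
- by move=> k; exact: has_deriv_on_srm_deriv.
Qed.

Section CanonicalSum.
Variables (R : realType) (H : comAlgType R) (hA : cgHopf H) (T : R).
Hypothesis T_gt0 : 0 < T.
Local Notation I := (inI T).
Local Notation hd := (has_deriv_on T).
Local Notation eps := (eps hA).
Local Notation conv := (hconv hA).

Variables X Y : R -> R -> H -> R.
Hypothesis X_srm : is_srm hA T X.
Hypothesis Y_srm : is_srm hA T Y.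

Lemma small_o_hconv_comm s x : I s ->
  small_o T s (fun t => conv (X s t) (Y s t) x - conv (Y s t) (X s t) x).
Proof.
move=> Is.
apply: (small_o_sub _ _ (has_deriv_on_srm_hconv T_gt0 Y_srm X_srm (x := x) Is)).
  by rewrite (srm_diag X_srm Is) (srm_diag Y_srm Is).
by rewrite addrC; exact: has_deriv_on_srm_hconv.
Qed.

Lemma small_o_hconv_sum s x : I s ->
  small_o T s (fun t => conv (X s t) (Y s t) x - (X s t x + Y s t x - eps x)).
Proof.
move=> Is.
apply: (small_o_sub _ (has_deriv_on_srm_hconv T_gt0 X_srm Y_srm (x := x) Is)).
  by rewrite (srm_diag X_srm Is) (srm_diag Y_srm Is) (hconv_epsl hA (eps_lin hA)) addrK.
have := has_deriv_onD (has_deriv_on_srm_deriv T_gt0 X_srm (h := x) Is)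
  (has_deriv_on_srm_deriv T_gt0 Y_srm (h := x) Is).
move/has_deriv_onD/(_ (has_deriv_onN (has_deriv_on_cst T (eps x) s))).
by rewrite oppr0 addr0.
Qed.

Lemma hconv_srm_approx s : I s -> exists r r' : R -> H -> R,
  (forall t, I t ->
     linR (r t) /\ linR (r' t) /\
     conv (X s t) (Y s t) = (fun h => conv (Y s t) (X s t) h + r t h) /\
     conv (X s t) (Y s t) = (fun h => X s t h + Y s t h - eps h + r' t h)) /\
  (forall x, small_o T s (fun t => r t x) /\ small_o T s (fun t => r' t x)).
Proof.
move=> Is; exists (fun t h => conv (X s t) (Y s t) h - conv (Y s t) (X s t) h).
exists (fun t h => conv (X s t) (Y s t) h - (X s t h + Y s t h - eps h)).
split => [t It | x].
  2: by split; [exact: small_o_hconv_comm | exact: small_o_hconv_sum].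
have lX := srm_lin X_srm Is It; have lY := srm_lin Y_srm Is It.
split; first by apply: linR_sub; exact: linR_hconv.
split.
  apply: linR_sub; first exact: linR_hconv.
  by apply: linR_sub; [exact: linR_add | exact: eps_lin].
by split; apply/funext => h; rewrite addrC subrK.
Qed.

Lemma is_boxplus_chen_approx Z :
  (forall s t, I s -> I t -> is_char (Z s t)) -> is_boxplus hA T X Y Z ->
  (forall s u t, I s -> I u -> I t -> Z s t = conv (Z s u) (Z u t)) /\
  (forall s, I s -> exists Rm : R -> H -> R,
     (forall t, I t ->
        linR (Rm t) /\ Z s t = (fun h => conv (X s t) (Y s t) h + Rm t h)) /\
     (forall x, small_o T s (fun t => Rm t x))).
Proof.
move=> Z_char [dX [dY [gam [dX_deriv [dY_deriv [gam_dev Z_incr]]]]]].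
have dX_inf t : I t -> is_infchar hA (dX t).
  by move=> It; apply: (srm_diag_deriv_infchar T_gt0 X_srm It) => h; exact: dX_deriv.
have dY_inf t : I t -> is_infchar hA (dY t).
  by move=> It; apply: (srm_diag_deriv_infchar T_gt0 Y_srm It) => h; exact: dY_deriv.
have eta_inf t : I t -> is_infchar hA (fun h => dX t h + dY t h).
  by move=> It; exact: infcharD (dX_inf t It) (dY_inf t It).
have gam_char := cartan_dev_char eta_inf gam_dev.
split => [s u t Is Iu It | s Is].
  by rewrite !Z_incr // (increments_chen hA gam_char Is Iu It).
exists (fun t h => Z s t h - conv (X s t) (Y s t) h); split => [t It | x].
  split; last by apply/funext => h; rewrite addrC subrK.
  apply: linR_sub; first exact: (Z_char s t Is It).1.
  exact: linR_hconv (srm_lin X_srm Is It) (srm_lin Y_srm Is It).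
have Z_deriv : hd (fun u => Z s u x) s (dX s x + dY s x).
  apply: (has_deriv_on_ext _ Is (cartan_dev_increment_deriv (x := x) eta_inf gam_dev Is)).
  by move=> u Iu; rewrite Z_incr.
have XY_deriv : hd (fun u => conv (X s u) (Y s u) x) s (dX s x + dY s x).
  apply: has_deriv_on_hconv (srm_diag X_srm Is) (srm_diag Y_srm Is) _ _ _ _.
  - exact: (dX_inf s Is).1.
  - exact: (dY_inf s Is).1.
  - by move=> k; exact: dX_deriv.
  - by move=> k; exact: dY_deriv.
apply: (small_o_sub _ Z_deriv XY_deriv).
rewrite Z_incr // (hconv_invl hA (gam_char s Is)) (srm_diag X_srm Is) (srm_diag Y_srm Is).
by rewrite (hconv_epsl hA (eps_lin hA)).
Qed.

Lemma has_deriv_on_hconv_approx Z Rm t k : I t -> Z t t = eps ->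
  (forall u, I u -> Z t u k = conv (X t u) (Y t u) k + Rm u k) ->
  small_o T t (fun u => Rm u k) ->
  hd (fun u => Z t u k) t (srm_deriv hA T X t k + srm_deriv hA T Y t k).
Proof.
move=> It Ztt Z_split Rm_o.
have Rm_t : Rm t k = 0.
  move: (Z_split t It); rewrite Ztt (srm_diag X_srm It) (srm_diag Y_srm It).
  by rewrite (hconv_epsl hA (eps_lin hA)) => e; apply: (addrI (eps k)); rewrite addr0 -e.
have Rm_deriv := (small_o_has_deriv_on0 T (f := fun u => Rm u k) Rm_t).1 Rm_o.
have := has_deriv_onD (has_deriv_on_srm_hconv T_gt0 X_srm Y_srm (x := k) It) Rm_deriv.
rewrite addr0 => XY_Rm_deriv; apply: (has_deriv_on_ext _ It XY_Rm_deriv) => u Iu.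
by rewrite Z_split.
Qed.

Lemma chen_approx_is_boxplus Z :
  (forall s t, I s -> I t -> is_char (Z s t)) ->
  (forall s u t, I s -> I u -> I t -> Z s t = conv (Z s u) (Z u t)) /\
  (forall s, I s -> exists Rm : R -> H -> R,
     (forall t, I t ->
        linR (Rm t) /\ Z s t = (fun h => conv (X s t) (Y s t) h + Rm t h)) /\
     (forall x, small_o T s (fun t => Rm t x))) ->
  is_boxplus hA T X Y Z.
Proof.
move=> Z_char [Z_chen Z_approx]; have I0 := inI0 T_gt0.
have Z_chen' s u t : I s -> I u -> I t -> conv (Z s u) (Z u t) = Z s t.
  by move=> Is Iu It; rewrite -Z_chen.
pose eta t h := srm_deriv hA T X t h + srm_deriv hA T Y t h.
have Z_deriv t k : I t -> hd (fun u => Z t u k) t (eta t k).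
  move=> It; have [Rm [Z_split Rm_o]] := Z_approx t It.
  apply: (has_deriv_on_hconv_approx It (chen_diag Z_char Z_chen' It) _ (Rm_o k)).
  by move=> u Iu; rewrite (Z_split u Iu).2.
have Z0_deriv t h : I t -> hd (fun u => Z 0 u h) t (conv (Z 0 t) (eta t) h).
  move=> It.
  apply: (has_deriv_on_ext _ It (has_deriv_on_hconvr (fun k => Z_deriv t k It))).
  by move=> u Iu; rewrite Z_chen'.
exists (srm_deriv hA T X), (srm_deriv hA T Y), (Z 0).
split; first by move=> t h It; exact: has_deriv_on_srm_deriv.
split; first by move=> t h It; exact: has_deriv_on_srm_deriv.
split; last by move=> s t Is It; exact (chen_inv Z_char Z_chen' I0 Is It).
split; first by move=> t It; exact: (Z_char 0 t I0 It).1.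
split; first exact (chen_diag Z_char Z_chen' I0).
split; last exact: Z0_deriv.
apply: (smooth_on_bootstrap T_gt0 (F := fun h t => Z 0 t h)
  (G := fun h t => conv (Z 0 t) (eta t) h)) => [h x Ix | k Zk h].
  exact: Z0_deriv.
apply: (derivable_upto_sum T_gt0) => p; apply: (derivable_uptoM T_gt0 (Zk p.1)).
exact: (derivable_uptoD T_gt0 (derivable_upto_srm_deriv T_gt0 X_srm (k := k) (h := p.2))
                    (derivable_upto_srm_deriv T_gt0 Y_srm (k := k) (h := p.2))).
Qed.

End CanonicalSum.

Theorem proposition4p16 (R : realType) (H : comAlgType R) (hA : cgHopf H)
  (T : R) (X Y : R -> R -> H -> R) :
  0 < T -> is_srm hA T X -> is_srm hA T Y ->
  (forall Z : R -> R -> H -> R,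
     (forall s t, inI T s -> inI T t -> is_char (Z s t)) ->
     (is_boxplus hA T X Y Z <->
      ((forall s u t, inI T s -> inI T u -> inI T t ->
          Z s t = hconv hA (Z s u) (Z u t)) /\
       (forall s, inI T s -> exists Rm : R -> H -> R,
          (forall t, inI T t -> linR (Rm t) /\
             Z s t = (fun h => hconv hA (X s t) (Y s t) h + Rm t h)) /\
          (forall x, small_o T s (fun t => Rm t x)))))) /\
  (forall s, inI T s -> exists r r' : R -> H -> R,
     (forall t, inI T t ->
        linR (r t) /\ linR (r' t) /\
        hconv hA (X s t) (Y s t) = (fun h => hconv hA (Y s t) (X s t) h + r t h) /\
        hconv hA (X s t) (Y s t) = (fun h => X s t h + Y s t h - eps hA h + r' t h)) /\
     (forall x, small_o T s (fun t => r t x) /\ small_o T s (fun t => r' t x))).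
Proof.
move=> T_gt0 X_srm Y_srm; split => [Z Z_char | s Is].
  split; first exact: (is_boxplus_chen_approx T_gt0 X_srm Y_srm Z_char).
  exact: (chen_approx_is_boxplus T_gt0 X_srm Y_srm Z_char).
exact: (hconv_srm_approx T_gt0 X_srm Y_srm Is).
Qed.
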